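(* Let $Y$ be a finite set. The map sending a diversity $\delta$ on $Y$ to the distance $d_\delta$ on $\mathcal{P}_{\neq\emptyset}(Y)$ is injective.
   Context: $\mathcal{P}_{\neq\emptyset}(Y)$ is the set of non-empty subsets of $Y$. A diversity on $Y$ is $\delta:\mathcal{P}(Y)\to\mathbb{R}$ with (D1) $\delta(A\cup B)+\delta(B\cup C)\ge\delta(A\cup C)$ for all $A,C\subseteq Y$ and non-empty $B\subseteq Y$, and (D2) $\delta(A)=0$ whenever $|A|\le1$. For $A,B\in\mathcal{P}_{\neq\emptyset}(Y)$: $d_\delta(A,B)=\max(0,\delta(A\cup B)-\delta(A)-\delta(B))$ if $A\ne B$ and $d_\delta(A,A)=0$. *)

From HB Require Import structures.
From mathcomp Require Import all_boot all_order all_algebra.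
Set Implicit Arguments. Unset Strict Implicit. Unset Printing Implicit Defensive.
Import Order.TTheory GRing.Theory Num.Theory.
Local Open Scope ring_scope.

Definition is_diversity (R : realFieldType) (Y : finType) (delta : {set Y} -> R) : Prop :=
  (forall A B C : {set Y}, B != set0 ->
     delta (A :|: C) <= delta (A :|: B) + delta (B :|: C)) /\
  (forall A : {set Y}, (#|A| <= 1)%N -> delta A = 0).

(* The distance d_delta on non-empty subsets (defined on all subsets; only its
   values on non-empty subsets are used). *)
Definition d_div (R : realFieldType) (Y : finType) (delta : {set Y} -> R)
  (A B : {set Y}) : R :=
  if A == B then 0 else Num.max 0 (delta (A :|: B) - delta A - delta B).

(** For [a \in A] the distance between [A :\ a] and [[set a]] is exactly the
    increment [delta A - delta (A :\ a)], because the triangle inequality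
    through [[set a]] makes this increment non-negative.  When [#|A| >= 2] both
    sets are non-empty, so [delta A] is recovered from [delta (A :\ a)] and the
    distance; induction on [#|A|], starting from [delta = 0] on sets with at
    most one element, shows that the distance determines [delta]. *)

From HB Require Import structures.
From mathcomp Require Import all_boot all_order all_algebra.
From Stdlib Require Import FunctionalExtensionality.
Import Order.TTheory GRing.Theory Num.Theory.
Local Open Scope ring_scope.

Section Diversity.

Variables (R : realFieldType) (Y : finType) (delta : {set Y} -> R).
Hypothesis delta_div : is_diversity delta.

Lemma diversity_set1 (a : Y) : delta [set a] = 0.
Proof. by apply: (proj2 delta_div); rewrite cards1. Qed.

Lemma diversity_le_setU1 (A : {set Y}) (a : Y) : delta A <= delta (A :|: [set a]).
Proof.
have := proj1 delta_div A [set a] set0.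
by rewrite !setU0 diversity_set1 addr0; apply; apply/set0Pn; exists a; rewrite set11.
Qed.

Lemma d_div_setD1_set1 (A : {set Y}) (a : Y) : a \in A ->
  d_div delta (A :\ a) [set a] = delta A - delta (A :\ a).
Proof.
rewrite /d_div => aA; have eA : (A :\ a) :|: [set a] = A by rewrite setUC setD1K.
have -> : (A :\ a == [set a]) = false.
  by apply/negbTE/negP => /eqP E; move: (set11 a); rewrite -E setD11.
rewrite eA diversity_set1 subr0; apply: max_r.
by rewrite subr_ge0 -{2}eA diversity_le_setU1.
Qed.

End Diversity.

Theorem mainTheorem14 (R : realFieldType) (Y : finType)
  (delta1 delta2 : {set Y} -> R) :
  is_diversity delta1 -> is_diversity delta2 ->
  (forall A B : {set Y}, A != set0 -> B != set0 ->
     d_div delta1 A B = d_div delta2 A B) ->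
  delta1 = delta2.
Proof.
move=> div1 div2 d12; apply: functional_extensionality => A.
elim: {A}_.+1 {-2}A (ltnSn #|A|) => // n IH A cardA.
have [A_small | A_big] := leqP #|A| 1.
  by rewrite (proj2 div1) ?(proj2 div2).
have [a aA] : exists a, a \in A by apply/set0Pn; rewrite -card_gt0 (ltnW A_big).
have cardAa : #|A :\ a| = #|A|.-1 by rewrite (cardsD1 a A) aA.
have Aa_ne0 : A :\ a != set0 by rewrite -card_gt0 cardAa -ltnS prednK // (ltnW A_big).
have a_ne0 : [set a] != set0 by apply/set0Pn; exists a; rewrite set11.
have IHa : delta1 (A :\ a) = delta2 (A :\ a).
  by apply: IH; rewrite cardAa -ltnS prednK ?(ltnW A_big).
have := d12 _ _ Aa_ne0 a_ne0.
by rewrite !d_div_setD1_set1 // IHa => /(congr1 (+%R^~ (delta2 (A :\ a)))); rewrite !subrK.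
Qed.
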